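(* For any extended mm-space $X$, there exist $(a_n)_{n=1}^N\in\mathcal A_1$ and a sequence of mm-spaces $\{X_n\}_{n=1}^N$ such that the direct sum $\sum_{n=1}^N X_n^{a_n}$ is mm-isomorphic to $X$. Moreover, if $(a_n)_{n=1}^N,(b_m)_{m=1}^M\in\mathcal A_1$, $\{X_n\}_{n=1}^N$, $\{Y_m\}_{m=1}^M$ are sequences of mm-spaces, and $\sum_{n=1}^N X_n^{a_n}$ and $\sum_{m=1}^M Y_m^{b_m}$ are mm-isomorphic, then $N=M$ and there exists a bijective map $\varphi:[N]\to[N]$ such that $a_n=b_{\varphi(n)}$ and $X_n$ is mm-isomorphic to $Y_{\varphi(n)}$ for each $n\in[N]$.
   Context: An mm-space is a triple $(X,d_X,\mu_X)$ with $(X,d_X)$ a complete separable metric space and $\mu_X$ a Borel probability measure; an extended mm-space is the same with the metric allowed to take values in $[0,+\infty]$. Two (extended) mm-spaces are mm-isomorphic if there is an isometry $f:\operatorname{supp}\mu_X\to\operatorname{supp}\mu_Y$ with $f_*\mu_X=\mu_Y$; one assumes $X=\operatorname{supp}\mu_X$. $\overline{\mathbb N}=\mathbb N\cup\{\infty\}$, $[N]=\{1,\dots,N\}$ for finite $N$, $[\infty]=\mathbb N$. $\mathcal A_1$ is the set of sequences $(a_n)_{n=1}^N$, $N\in\overline{\mathbb N}$, with $a_n\in(0,1]$ and $\sum_n a_n=1$. For $(a_n)_{n=1}^N\in\mathcal A_1$ and mm-spaces $X_n$, the direct sum $\sum_{n=1}^N X_n^{a_n}$ is the extended mm-space on the disjoint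 union $\bigsqcup_n X_n$ with extended metric $d(x,y)=d_{X_n}(x,y)$ if $x,y\in X_n$ and $d(x,y)=+\infty$ if $x,y$ lie in different pieces, and measure $\sum_n a_n\mu_{X_n}$. *)

From mathcomp Require Import all_boot all_order all_algebra.
From mathcomp Require Import all_classical all_reals all_analysis.
Set Implicit Arguments. Unset Strict Implicit. Unset Printing Implicit Defensive.
Import Order.TTheory GRing.Theory Num.Theory.
Import numFieldNormedType.Exports.
Local Open Scope classical_set_scope.
Local Open Scope ring_scope.

(* Raw data of an (extended) metric measure mmdata: a carrier type, an
   extended metric with values in \bar R and a set function (meaningful on
   Borel sets only). *)
Record mmdata (R : realType) := Space {
  mcar :> Type;
  mdist : mcar -> mcar -> \bar R;
  mmeas : set mcar -> \bar R }.

Section Defs.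
Variable R : realType.
Local Open Scope ereal_scope.

Definition eopen (T : Type) (d : T -> T -> \bar R) (A : set T) : Prop :=
  forall x, A x -> exists e : R, (0 < e)%R /\ (forall y, d x y < e%:E -> A y).

Definition is_sigma_algebra (T : Type) (G : set T -> Prop) : Prop :=
  [/\ G set0, (forall A, G A -> G (~` A)) &
      (forall F : nat -> set T, (forall n, G (F n)) -> G (\bigcup_n F n))].

Definition eborel (T : Type) (d : T -> T -> \bar R) (A : set T) : Prop :=
  forall G, is_sigma_algebra G -> (forall O, eopen d O -> G O) -> G A.

Definition is_emetric (T : Type) (d : T -> T -> \bar R) : Prop :=
  [/\ (forall x y, 0 <= d x y), (forall x, d x x = 0),
      (forall x y, d x y = 0 -> x = y), (forall x y, d x y = d y x) &
      (forall x y z, d x z <= d x y + d y z)].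

Definition is_complete (T : Type) (d : T -> T -> \bar R) : Prop :=
  forall u : nat -> T,
    (forall e : R, (0 < e)%R -> exists N, forall m n, (N <= m)%N -> (N <= n)%N ->
        d (u m) (u n) < e%:E) ->
    exists x, forall e : R, (0 < e)%R -> exists N, forall n, (N <= n)%N ->
        d (u n) x < e%:E.

Definition is_separable (T : Type) (d : T -> T -> \bar R) : Prop :=
  exists s : nat -> T, forall x (e : R), (0 < e)%R -> exists n, d x (s n) < e%:E.

Definition is_borel_prob (T : Type) (d : T -> T -> \bar R) (mu : set T -> \bar R) :=
  [/\ mu set0 = 0, (forall A, eborel d A -> 0 <= mu A),
      (forall F : nat -> set T, (forall n, eborel d (F n)) ->
         (forall i j, i <> j -> F i `&` F j = set0) ->
         (fun n => \sum_(0 <= i < n) mu (F i)) @ \oo --> mu (\bigcup_n F n)) &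
      mu setT = 1].

Definition ext_mm_space (X : mmdata R) : Prop :=
  [/\ is_emetric (@mdist R X), is_complete (@mdist R X), is_separable (@mdist R X) &
      is_borel_prob (@mdist R X) (@mmeas R X)].

Definition mm_space (X : mmdata R) : Prop :=
  ext_mm_space X /\ (forall x y : mcar X, mdist x y < +oo).

Definition msupp (X : mmdata R) : set (mcar X) :=
  [set x | forall e : R, (0 < e)%R -> 0 < @mmeas R X [set y | mdist x y < e%:E]].
Arguments msupp : clear implicits.

Definition mm_iso (X Y : mmdata R) : Prop :=
  exists f : mcar X -> mcar Y,
    [/\ (forall x, msupp X x -> msupp Y (f x)),
        (forall x x', msupp X x -> msupp X x' -> mdist (f x) (f x') = mdist x x'),
        (forall y, msupp Y y -> exists2 x, msupp X x & f x = y) &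
        (forall B, eborel (@mdist R Y) B -> @mmeas R Y B = @mmeas R X (msupp X `&` f @^-1` B))].

(* index sets: N : option nat, None standing for infinity;
   [N] = {1,...,N}, [infinity] = {1,2,...} *)
Definition nidx (N : option nat) (n : nat) : bool :=
  match N with Some k => (1 <= n <= k)%N | None => (1 <= n)%N end.

Local Close Scope ereal_scope.
Definition inA1 (N : option nat) (a : nat -> R) : Prop :=
  (forall n, nidx N n -> (0 < a n <= 1)%R)%R /\
  match N with
  | Some k => (\sum_(1 <= n < k.+1) a n)%R = 1%R
  | None => (fun m => (\sum_(1 <= n < m.+1) a n)%R) @ \oo --> (1 : R)
  end.

Local Open Scope ereal_scope.
Section DirectSum.
Variables (N : option nat) (a : nat -> R) (Xs : nat -> mmdata R).

Definition dsum_car : Type := {i : {n : nat | nidx N n} & mcar (Xs (val i))}.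

Definition dsum_dist (p q : dsum_car) : \bar R :=
  match eq_comparable (val (projT1 p)) (val (projT1 q)) with
  | left e => mdist (eq_rect _ (fun k => mcar (Xs k)) (projT2 p) _ e) (projT2 q)
  | right _ => +oo
  end.

Definition dsum_slice (A : set dsum_car) (n : nat) : set (mcar (Xs n)) :=
  [set x : mcar (Xs n) | exists h : nidx N n,
     A (existT (fun i : {k : nat | nidx N k} => mcar (Xs (val i))) (exist _ n h) x)].

Definition dsum_meas (A : set dsum_car) : \bar R :=
  \sum_(n <oo | nidx N n) ((a n)%:E * @mmeas R (Xs n) (@dsum_slice A n)).

Definition dsum : mmdata R := Space dsum_dist dsum_meas.
End DirectSum.

End Defs.

(* Points at finite distance from each other form the classes of an
   equivalence relation.  The classes are open, and by separability only
   countably many of them meet the support of the measure, which has full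
   measure.  Renormalising the measure on each of these classes gives the
   pieces [X_n], with weights [a_n] the masses of the classes, and projecting
   the direct sum back onto [X] is an mm-isomorphism.
   Conversely, two points of a direct sum lie in the same piece iff their
   distance is finite, so an mm-isomorphism of direct sums sends the support of
   each piece into a single piece.  This induces a bijection [phi] of the
   indices, the restrictions are mm-isomorphisms [X_n -> Y_(phi n)], and
   comparing the masses of whole pieces gives [a_n = b_(phi n)]. *)

From mathcomp Require Import all_boot all_order all_algebra.
From mathcomp Require Import all_classical all_reals all_analysis.
(* Imported after the analysis library, whose [msupp] it must shadow. *)
From Stdlib Require Import ClassicalEpsilon Eqdep_dec.
Set Implicit Arguments. Unset Strict Implicit. Unset Printing Implicit Defensive.
Import Order.TTheory GRing.Theory Num.Theory.
Local Open Scope classical_set_scope.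
Local Open Scope ring_scope.

Section Borel.
Variables (R : realType) (T : Type) (d : T -> T -> \bar R).

Lemma eborel_open A : eopen d A -> eborel d A.
Proof. by move=> oA G _; apply. Qed.

Lemma eborel0 : eborel d set0.
Proof. by move=> G [G0 _ _]. Qed.

Lemma eborelC A : eborel d A -> eborel d (~` A).
Proof. by move=> hA G sG HG; case: (sG) => _ GC _; apply: GC; apply: hA. Qed.

Lemma eborel_bigcup (F : nat -> set T) :
  (forall n, eborel d (F n)) -> eborel d (\bigcup_n F n).
Proof. by move=> hF G sG HG; case: (sG) => _ _ GU; apply: GU => n; apply: hF. Qed.

Lemma eborelT : eborel d setT.
Proof. by rewrite -setC0; apply: eborelC; apply: eborel0. Qed.

Lemma eborelU A B : eborel d A -> eborel d B -> eborel d (A `|` B).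
Proof.
move=> hA hB; have -> : A `|` B = \bigcup_n (if n is 0 then A else B).
  apply/seteqP; split=> x; first by case=> ?; [exists 0%N | exists 1%N].
  by case=> -[|n] _ /=; [left | right].
by apply: eborel_bigcup => -[|n].
Qed.

Lemma eborelI A B : eborel d A -> eborel d B -> eborel d (A `&` B).
Proof.
move=> hA hB; rewrite -[A `&` B]setCK setCI.
by apply: eborelC; apply: eborelU; apply: eborelC.
Qed.

Lemma eborelD A B : eborel d A -> eborel d B -> eborel d (A `\` B).
Proof. by move=> hA hB; rewrite setDE; apply: eborelI => //; apply: eborelC. Qed.

Lemma eborel_bigsetU (F : nat -> set T) n :
  (forall k, eborel d (F k)) -> eborel d (\big[setU/set0]_(k < n) F k).
Proof.
move=> hF; elim: n => [|n IH]; first by rewrite big_ord0; apply: eborel0.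
by rewrite big_ord_recr; apply: eborelU.
Qed.

End Borel.

(* For injective [h] the sets with a Borel image form a sigma-algebra. *)
Lemma eborel_image (R : realType) (S T : Type) (dS : S -> S -> \bar R)
    (dT : T -> T -> \bar R) (h : S -> T) :
  injective h -> (forall O, eopen dS O -> eborel dT (h @` O)) ->
  forall A, eborel dS A -> eborel dT (h @` A).
Proof.
move=> h_inj h_open A hA; apply: (hA (fun B => eborel dT (h @` B))) => //.
have rangeB : eborel dT (range h).
  by apply: h_open => x _; exists 1%R; split.
split=> [|B hB|F hF]; first by rewrite image_set0; apply: eborel0.
- have -> : h @` (~` B) = range h `\` h @` B.
    apply/seteqP; split=> [_ [x nBx <-]|_ [[x _ <-] nhB]].
      by split; [exists x | case=> y By /h_inj yx; apply: nBx; rewrite -yx].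
    by exists x => // Bx; apply: nhB; exists x.
  exact: eborelD.
- by rewrite image_bigcup; apply: eborel_bigcup.
Qed.

Section BorelProbability.
Variables (R : realType) (T : Type) (d : T -> T -> \bar R) (mu : set T -> \bar R).
Hypothesis Hmu : is_borel_prob d mu.
Local Open Scope ereal_scope.

Lemma mu_set0 : mu set0 = 0. Proof. by case: Hmu. Qed.

Lemma mu_setT : mu setT = 1. Proof. by case: Hmu. Qed.

Lemma mu_ge0 A : eborel d A -> 0 <= mu A. Proof. by case: Hmu => _ + _ _; apply. Qed.

Lemma mu_cvg_bigcup (F : nat -> set T) : (forall n, eborel d (F n)) ->
  (forall i j, i <> j -> F i `&` F j = set0) ->
  (fun n => \sum_(0 <= i < n) mu (F i)) @ \oo --> mu (\bigcup_n F n).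
Proof. by case: Hmu => _ _ + _; apply. Qed.

Lemma mu_bigcup (F : nat -> set T) : (forall n, eborel d (F n)) ->
  (forall i j, i <> j -> F i `&` F j = set0) ->
  \sum_(i <oo) mu (F i) = mu (\bigcup_n F n).
Proof. by move=> hF hD; apply: (cvg_lim (@ereal_hausdorff R)); apply: mu_cvg_bigcup. Qed.

Lemma mu_setU A B : eborel d A -> eborel d B -> A `&` B = set0 ->
  mu (A `|` B) = mu A + mu B.
Proof.
move=> hA hB hAB; pose F n := if n is 0 then A else if n is 1 then B else set0.
have -> : A `|` B = \bigcup_n F n.
  apply/seteqP; split=> x; first by case=> ?; [exists 0%N | exists 1%N].
  by case=> -[|[|n]] _ //=; [left | right].
rewrite -mu_bigcup; first last.
- by move=> [|[|i]] [|[|j]] //= _; rewrite ?set0I ?setI0 // setIC.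
- by move=> [|[|n]] //=; apply: eborel0.
apply: (lim_near_cst (@ereal_hausdorff R)); near=> n.
have n2 : (2 <= n)%N by near: n; exists 2%N.
rewrite -(subnKC n2) big_mkord big_split_ord !big_ord_recl big_ord0 big1 /=.
  by rewrite !addr0.
by move=> i _; exact: mu_set0.
Unshelve. all: by end_near.
Qed.

Lemma le_mu A B : eborel d A -> eborel d B -> A `<=` B -> mu A <= mu B.
Proof.
move=> hA hB AB; have hBA : eborel d (B `\` A) by apply: eborelD.
rewrite -(setDUK AB) mu_setU //; first by rewrite leeDl // mu_ge0.
by rewrite setDE setICA setICr setI0.
Qed.

Lemma subset_mu_null A B : eborel d A -> eborel d B -> A `<=` B ->
  mu B = 0 -> mu A = 0.
Proof. by move=> hA hB AB B0; apply/eqP; rewrite eq_le mu_ge0 // -B0 le_mu. Qed.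

Lemma mu_bigcup_null (F : nat -> set T) : (forall n, eborel d (F n)) ->
  (forall n, mu (F n) = 0) -> mu (\bigcup_n F n) = 0.
Proof.
move=> hF F0; have hG n : eborel d (seqDU F n).
  by apply: eborelD => //; apply: eborel_bigsetU.
rewrite seqDU_bigcup_eq -mu_bigcup //; last first.
  move=> i j ij; apply/eqP/negPn/negP => /set0P ne.
  by apply: ij; apply: (@trivIset_seqDU _ F i j).
rewrite eseries0 // => n _ _; apply: (subset_mu_null (hG n) (hF n)) => //.
exact: subset_seqDU.
Qed.

End BorelProbability.

Section ExtendedMetric.
Variables (R : realType) (T : Type) (d : T -> T -> \bar R).
Hypothesis Hd : is_emetric d.
Local Open Scope ereal_scope.

Definition eball (x : T) (e : R) := [set y | d x y < e%:E].

Lemma dist_ge0 x y : 0 <= d x y. Proof. by case: Hd => + _ _ _ _; apply. Qed.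
Lemma dist_xx x : d x x = 0. Proof. by case: Hd. Qed.
Lemma dist_eq0 x y : d x y = 0 -> x = y. Proof. by case: Hd => _ _ + _ _; apply. Qed.
Lemma distC x y : d x y = d y x. Proof. by case: Hd => _ _ _ + _; apply. Qed.
Lemma dist_triangle x y z : d x z <= d x y + d y z.
Proof. by case: Hd => _ _ _ _; apply. Qed.

Lemma lt_dist_triangle x y z (r s : R) :
  d x y < r%:E -> d y z < s%:E -> d x z < (r + s)%:E.
Proof. by move=> hr hs; apply: le_lt_trans (dist_triangle x y z) _; rewrite EFinD lteD. Qed.

Lemma eball_sub x y (e : R) : d x y < e%:E ->
  exists2 e' : R, (0 < e')%R & eball y e' `<=` eball x e.
Proof.
move=> dxy; have := dist_ge0 x y; case dxyE: (d x y) dxy => [r| |] // re r0.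
exists (e - r)%R; first by rewrite subr_gt0 -lte_fin.
move=> z hz; apply: le_lt_trans (dist_triangle x y z) _.
have -> : e = (r + (e - r))%R by rewrite addrC subrK.
by rewrite dxyE EFinD lteD2lE.
Qed.

Lemma eball_open x e : eopen d (eball x e).
Proof. by move=> y /eball_sub [e' e'0 sub]; exists e'; split => // z /sub. Qed.

Lemma eball_borel x e : eborel d (eball x e).
Proof. by apply: eborel_open; apply: eball_open. Qed.

Definition fin_class (x : T) := [set y | d x y < +oo].

Lemma fin_class_refl x : fin_class x x.
Proof. by rewrite /fin_class /= dist_xx. Qed.

Lemma fin_class_sym x y : fin_class x y -> fin_class y x.
Proof. by rewrite /fin_class /= distC. Qed.

Lemma fin_class_trans x y z : fin_class x y -> fin_class y z -> fin_class x z.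
Proof.
by move=> hxy hyz; apply: le_lt_trans (dist_triangle x y z) _; apply: lte_add_pinfty.
Qed.

Lemma fin_class_eq x y : fin_class x y -> fin_class x = fin_class y.
Proof.
move=> hxy; apply/seteqP; split => z; last exact: fin_class_trans.
by move=> hxz; apply: fin_class_trans (fin_class_sym hxy) hxz.
Qed.

Lemma eball_fin_class x e : eball x e `<=` fin_class x.
Proof. by move=> y hy; rewrite /fin_class /= (lt_trans hy) ?ltry. Qed.

Lemma fin_class_borel x : eborel d (fin_class x).
Proof.
apply: eborel_open => y hy; exists 1%R; split => // z /eball_fin_class.
exact: fin_class_trans.
Qed.

End ExtendedMetric.

Lemma ext_mm_space_emetric (R : realType) (X : mmdata R) :
  ext_mm_space X -> is_emetric (@mdist R X).
Proof. by case. Qed.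

Lemma ext_mm_space_prob (R : realType) (X : mmdata R) :
  ext_mm_space X -> is_borel_prob (@mdist R X) (@mmeas R X).
Proof. by case. Qed.

Section Support.
Variables (R : realType) (X : mmdata R).
Hypothesis HX : ext_mm_space X.
Local Notation d := (@mdist R X).
Local Notation mu := (@mmeas R X).
Local Notation supp := (@msupp R X).
Local Open Scope ereal_scope.

Let Hd := ext_mm_space_emetric HX.
Let Hmu := ext_mm_space_prob HX.

Lemma mu_eball_ge0 x e : 0 <= mu (eball d x e).
Proof. by apply: (mu_ge0 Hmu); apply: eball_borel. Qed.

Lemma not_msupp x : ~ supp x -> exists2 e : R, (0 < e)%R & mu (eball d x e) = 0.
Proof.
move=> /existsNP [e] /not_implyP [e0 he]; exists e => //.
by apply/eqP; rewrite eq_le mu_eball_ge0 andbT leNgt; apply/negP.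
Qed.

Lemma msuppC_open : eopen d (~` supp).
Proof.
move=> x /not_msupp [e e0 he]; exists (e / 2)%R; split; first by rewrite divr_gt0.
move=> y hy; have sub : eball d y (e / 2) `<=` eball d x e.
  by move=> z hz; rewrite /eball /= (splitr e); exact: (lt_dist_triangle Hd hy hz).
move=> supp_y; have := supp_y (e / 2)%R; rewrite divr_gt0 // => /(_ isT).
by rewrite (subset_mu_null Hmu _ _ sub he) ?ltxx //; apply: eball_borel.
Qed.

Lemma msupp_borel : eborel d supp.
Proof. by rewrite -[supp]setCK; apply: eborelC; apply: eborel_open; apply: msuppC_open. Qed.

(* Separability: the complement of the support is covered by countably many
   null balls centred at points of a dense sequence. *)
Lemma mu_msuppC : mu (~` supp) = 0.
Proof.
case: HX => _ _ [s dense] _.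
pose r j : R := (j.+1%:R)^-1%R.
have r_gt0 j : (0 < r j)%R by rewrite invr_gt0.
pose E k j := if mu (eball d (s k) (r j)) == 0 then eball d (s k) (r j) else set0.
have E_borel k j : eborel d (E k j).
  by rewrite /E; case: ifP => _; [apply: eball_borel | apply: eborel0].
have -> : ~` supp = \bigcup_k \bigcup_j E k j.
  apply/seteqP; split => x.
    move=> /not_msupp [e e0 he]; pose j := Num.Def.trunc (2 / e).
    have rj : (r j < e / 2)%R.
      rewrite /r invf_plt ?posrE ?divr_gt0 // invf_div; exact: truncnS_gt.
    have [k hk] := dense x (r j) (r_gt0 j).
    exists k => //; exists j => //; rewrite /E ifT; first by rewrite /eball /= distC.
    apply/eqP; apply: (subset_mu_null Hmu _ _ _ he); try exact: eball_borel.
    move=> z hz; apply: lt_trans (lt_dist_triangle Hd hk hz) _.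
    by rewrite lte_fin [in ltRHS](splitr e) ltrD.
  move=> [k _ [j _]]; rewrite /E; case: ifP => [/eqP null hx|//].
  have [e' e'0 sub] := eball_sub Hd hx; move=> /(_ e' e'0).
  by rewrite (subset_mu_null Hmu _ _ sub null) ?ltxx //; apply: eball_borel.
apply: (mu_bigcup_null Hmu) => [k|k]; first exact: eborel_bigcup.
apply: (mu_bigcup_null Hmu) => // j; rewrite /E; case: ifP => [/eqP //|_].
exact: (mu_set0 Hmu).
Qed.

Lemma mu_setI_msupp A : eborel d A -> mu (A `&` supp) = mu A.
Proof.
move=> hA; have hsupp := msupp_borel.
have hAC : eborel d (A `&` ~` supp) by apply: eborelI => //; apply: eborelC.
rewrite -[in RHS](setIT A) -(setUv supp) setIUr (mu_setU Hmu) //; last first.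
- by rewrite setIACA setICr setI0.
- exact: eborelI.
by rewrite (subset_mu_null Hmu hAC _ _ mu_msuppC) ?adde0 //; apply: eborelC.
Qed.

Lemma mu_msupp : mu supp = 1.
Proof. by rewrite -[supp]setTI mu_setI_msupp ?(mu_setT Hmu) //; apply: eborelT. Qed.

Lemma msupp_nonempty : exists x, supp x.
Proof.
apply: NNPP => /forallNP supp0; have := mu_msupp.
rewrite (_ : supp = set0) ?(mu_set0 Hmu) //; first by case=> /eqP; rewrite eq_sym oner_eq0.
by apply/seteqP; split => x // /supp0.
Qed.

Lemma mu_fin_class_gt0 x : supp x -> 0 < mu (fin_class d x).
Proof.
move=> /(_ 1%R ltr01) /lt_le_trans; apply.
apply: (le_mu Hmu); [exact: eball_borel | exact: fin_class_borel |].
exact: eball_fin_class.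
Qed.

End Support.

Section IsometricEmbedding.
Variables (R : realType) (S T : Type) (dS : S -> S -> \bar R) (dT : T -> T -> \bar R).
Variable h : S -> T.
Hypothesis h_eball : forall x e, eball dT (h x) e = h @` eball dS x e.

Lemma embed_open O : eopen dS O -> eopen dT (h @` O).
Proof.
move=> oO _ [x Ox <-]; have [e [e0 sub]] := oO x Ox; exists e; split => // y hy.
have : eball dT (h x) e y by [].
by rewrite h_eball => -[z hz <-]; exists z => //; apply: sub.
Qed.

Lemma embed_borel A : injective h -> eborel dS A -> eborel dT (h @` A).
Proof.
move=> h_inj; apply: (eborel_image h_inj) => O oO.
by apply: eborel_open; apply: embed_open.
Qed.

End IsometricEmbedding.

Lemma embed_msupp (R : realType) (S T : mmdata R) (h : S -> T) (c : R) :
  (0 < c)%R -> (forall x e, eball (@mdist R T) (h x) e = h @` eball (@mdist R S) x e) ->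
  (forall A, mmeas (h @` A) = (c%:E * mmeas A)%E) ->
  forall x, msupp (h x) <-> msupp x.
Proof.
move=> c_gt0 h_eball h_meas x.
have mu_eball e :
    (0 < mmeas (eball (@mdist R T) (h x) e))%E = (0 < mmeas (eball (@mdist R S) x e))%E.
  by rewrite h_eball h_meas pmule_rgt0 // lte_fin.
by split=> hs e e0; [rewrite -mu_eball | rewrite mu_eball]; apply: hs.
Qed.

Lemma inA1_gt0 (R : realType) (N : option nat) (a : nat -> R) n :
  inA1 N a -> nidx N n -> 0 < a n.
Proof. by case=> + _ hn => /(_ n hn) /andP []. Qed.

Lemma EFin_muleI (R : realFieldType) (c : R) :
  c != 0 -> injective (fun x : \bar R => (c%:E * x)%E).
Proof.
move=> c0 x y /(congr1 (fun z => (c^-1%:E * z)%E)) /=.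
by rewrite !muleA -EFinM mulVf // !mul1e.
Qed.

Lemma eseries_single (R : realType) (P : pred nat) (f : nat -> \bar R) n : P n ->
  (forall k, P k -> k != n -> f k = 0%E) -> (\sum_(k <oo | P k) f k)%E = f n.
Proof.
move=> Pn f0; apply: (lim_near_cst (@ereal_hausdorff R)); near=> m.
have nm : (n < m)%N by near: m; exists n.+1.
rewrite big_mkcond (bigD1_seq n) ?mem_index_iota ?iota_uniq //= Pn big1 ?adde0 //.
by move=> k kn; case: ifP => // Pk; apply: f0.
Unshelve. all: by end_near.
Qed.

Section DirectSum.
Variables (R : realType) (N : option nat) (Xs : nat -> mmdata R).
Local Notation car := (dsum_car N Xs).
Local Notation dd := (@dsum_dist R N Xs).
Local Open Scope ereal_scope.

Definition dpiece (p : car) : nat := val (projT1 p).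

Lemma dpiece_idx p : nidx N (dpiece p). Proof. exact: valP. Qed.

Definition dinj n (hn : nidx N n) (x : Xs n) : car :=
  existT (fun i : {k | nidx N k} => mcar (Xs (val i))) (exist _ n hn) x.

Lemma dsum_carP p : exists n (hn : nidx N n) (x : Xs n), p = dinj hn x.
Proof. by case: p => -[n hn] x; exists n, hn, x. Qed.

Lemma eq_dinj n (hn hn' : nidx N n) : dinj hn =1 dinj hn'.
Proof. by rewrite (bool_irrelevance hn hn'). Qed.

Lemma dinj_inj n (hn : nidx N n) : injective (dinj hn).
Proof.
rewrite /dinj => x y e; apply: (inj_pair2_eq_dec _ _ _ _ _ _ e) => i j.
by case: (pselect (i = j)); [left | right].
Qed.

Lemma dsum_dist_dinj n (hn hn' : nidx N n) x y :
  dsum_dist (dinj hn x) (dinj hn' y) = mdist x y.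
Proof.
rewrite /dsum_dist /=; case: eq_comparable => //= e.
by rewrite (eq_irrelevance e (erefl n)).
Qed.

Lemma dsum_dist_neq p q : dpiece p <> dpiece q -> dsum_dist p q = +oo.
Proof. by rewrite /dsum_dist; case: eq_comparable. Qed.

Lemma dsum_car_dpiece p m (hm : nidx N m) : dpiece p = m -> exists x, p = dinj hm x.
Proof.
by have [n [hn [x ->]]] := dsum_carP p => /= nm; subst m; exists x; apply: eq_dinj.
Qed.

Lemma dsum_eball n (hn : nidx N n) x e :
  eball dd (dinj hn x) e = dinj hn @` eball (@mdist R (Xs n)) x e.
Proof.
apply/seteqP; split=> [q|_ [y hy <-]]; last by rewrite /eball /= dsum_dist_dinj.
have [m [hm [y ->]]] := dsum_carP q; rewrite /eball /=.
have [nm|nm] := eqVneq n m; last by rewrite dsum_dist_neq //; apply/eqP.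
by subst m; rewrite dsum_dist_dinj => hy; exists y; rewrite // eq_dinj.
Qed.

Lemma dsum_borel_dinj n (hn : nidx N n) A :
  eborel (@mdist R (Xs n)) A -> eborel dd (dinj hn @` A).
Proof. exact: (embed_borel (dsum_eball hn) (@dinj_inj n hn)). Qed.

Variable a : nat -> R.
Hypotheses (HA : inA1 N a) (HX : forall n, nidx N n -> mm_space (Xs n)).

Lemma dsum_meas_dinj n (hn : nidx N n) A :
  dsum_meas a (dinj hn @` A) = (a n)%:E * mmeas A.
Proof.
rewrite /dsum_meas (eseries_single hn).
  congr (_ * mmeas _); apply/seteqP; split=> [x [h [y Ay]]|x Ax]; last by exists hn, x.
  by rewrite -/(dinj h x) (eq_dinj h hn) => /dinj_inj <-.
move=> k hk /eqP kn; rewrite (_ : dsum_slice (n := k) _ = set0).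
  by rewrite (mu_set0 (ext_mm_space_prob (HX hk).1)) mule0.
apply/seteqP; split=> x // [h [y _ /(congr1 dpiece) /= nk]].
by apply: kn.
Qed.

Lemma dsum_msupp n (hn : nidx N n) x : msupp (dinj hn x : dsum N a Xs) <-> msupp x.
Proof.
apply: (embed_msupp (T := dsum N a Xs)) (inA1_gt0 HA hn) _ _ x.
- exact: dsum_eball.
- exact: dsum_meas_dinj.
Qed.

Lemma dsum_dist_fin p q : dsum_dist p q < +oo <-> dpiece p = dpiece q.
Proof.
have [n [hn [x ->]]] := dsum_carP p; have [m [hm [y ->]]] := dsum_carP q.
rewrite /dpiece /=; split=> [|nm]; last first.
  by subst m; rewrite dsum_dist_dinj; case: (HX hn) => _; apply.
by apply: contraPP => nm; rewrite dsum_dist_neq // ltxx.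
Qed.

Lemma dsum_msupp_piece n : nidx N n -> exists2 p, msupp (p : dsum N a Xs) & dpiece p = n.
Proof.
move=> hn; have [x hx] := msupp_nonempty (HX hn).1.
by exists (dinj hn x) => //; apply/dsum_msupp.
Qed.

End DirectSum.

Lemma nidx_bij_eq (N M : option nat) (phi : nat -> nat) :
  (forall n, nidx N n -> nidx M (phi n)) ->
  (forall n n', nidx N n -> nidx N n' -> phi n = phi n' -> n = n') ->
  (forall m, nidx M m -> exists2 n, nidx N n & phi n = m) -> N = M.
Proof.
move=> phiM phi_inj phi_onto.
have memI k i : (i \in iota 1 k) = nidx (Some k) i by rewrite mem_iota add1n ltnS.
have le_idx k l : (forall i, nidx (Some k) i -> nidx N i) ->
    (forall j, nidx M j -> nidx (Some l) j) -> (k <= l)%N.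
  move=> kN Ml; rewrite -[k](size_iota 1) -(size_map phi) -[l](size_iota 1).
  apply: uniq_leq_size => [|x /mapP [i]].
    rewrite map_inj_in_uniq ?iota_uniq // => i j.
    by rewrite !memI => /kN hi /kN; apply: phi_inj.
  by rewrite memI => /kN hi ->; rewrite memI; apply: Ml; apply: phiM.
have ge_idx k l : (forall j, nidx (Some k) j -> nidx M j) ->
    (forall i, nidx N i -> nidx (Some l) i) -> (k <= l)%N.
  move=> kM Nl; rewrite -[l](size_iota 1) -(size_map phi) -[k](size_iota 1).
  apply: uniq_leq_size (iota_uniq 1 k) _ => j; rewrite memI => /kM /phi_onto [i hi <-].
  by apply: map_f; rewrite memI; apply: Nl.
move: le_idx ge_idx; clear phiM phi_inj phi_onto.
have finite_idx k j : nidx (Some k) j -> nidx None j by case/andP.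
case: N M => [n|] [m|] // le_idx ge_idx.
- by congr Some; apply/eqP; rewrite eqn_leq le_idx ?ge_idx.
- by have := ge_idx n.+1 n (@finite_idx _) (fun _ h => h); rewrite ltnn.
- by have := le_idx m.+1 m (@finite_idx _) (fun _ h => h); rewrite ltnn.
Qed.

Section Uniqueness.
Variables (R : realType) (N M : option nat) (a b : nat -> R) (Xs Ys : nat -> mmdata R).
Hypotheses (HA : inA1 N a) (HB : inA1 M b).
Hypotheses (HX : forall n, nidx N n -> mm_space (Xs n))
  (HY : forall m, nidx M m -> mm_space (Ys m)).
Local Notation X := (dsum N a Xs).
Local Notation Y := (dsum M b Ys).
Variable f : X -> Y.
Hypotheses (f_supp : forall p, msupp p -> msupp (f p))
  (f_isom : forall p q, msupp p -> msupp q -> mdist (f p) (f q) = mdist p q)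
  (f_onto : forall q, msupp q -> exists2 p, msupp p & f p = q)
  (f_meas : forall B, eborel (@mdist R Y) B -> mmeas B = mmeas (@msupp R X `&` f @^-1` B)).
Local Open Scope ereal_scope.

(* [f] preserves finiteness of distances, which characterises lying in one piece. *)
Lemma dpiece_iso_eq p q : msupp p -> msupp q ->
  dpiece (f p) = dpiece (f q) <-> dpiece p = dpiece q.
Proof.
move=> hp hq; rewrite -(dsum_dist_fin HY) -(dsum_dist_fin HX).
by have := f_isom hp hq => /= ->.
Qed.

Definition piece_map (n : nat) : nat :=
  epsilon (inhabits 0%N)
    (fun m => exists2 p : X, msupp p & dpiece p = n /\ dpiece (f p) = m).

Lemma dpiece_iso p : msupp p -> dpiece (f p) = piece_map (dpiece p).
Proof.
move=> hp.
have : exists m, exists2 q : X, msupp q & dpiece q = dpiece p /\ dpiece (f q) = m.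
  by exists (dpiece (f p)), p.
move=> /(epsilon_spec (inhabits 0%N)) [q hq [qp fq]].
by rewrite /piece_map -fq; apply/(dpiece_iso_eq hp hq).
Qed.

Lemma piece_map_idx n : nidx N n -> nidx M (piece_map n).
Proof.
by move=> /(dsum_msupp_piece HA HX) [p hp <-]; rewrite -dpiece_iso //; apply: dpiece_idx.
Qed.

Lemma piece_map_inj n n' : nidx N n -> nidx N n' -> piece_map n = piece_map n' -> n = n'.
Proof.
move=> /(dsum_msupp_piece HA HX) [p hp <-] /(dsum_msupp_piece HA HX) [p' hp' <-].
by rewrite -!dpiece_iso // => /dpiece_iso_eq; apply.
Qed.

Lemma piece_map_onto m : nidx M m -> exists2 n, nidx N n & piece_map n = m.
Proof.
move=> /(dsum_msupp_piece HB HY) [q /f_onto [p hp <-] <-].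
by exists (dpiece p); [apply: dpiece_idx | rewrite dpiece_iso].
Qed.

Lemma dsum_idx_eq : N = M.
Proof. exact: nidx_bij_eq piece_map_idx piece_map_inj piece_map_onto. Qed.

Variables (n : nat) (hn : nidx N n).
Let hm := piece_map_idx hn.

Let Ym_inhabited : inhabited (Ys (piece_map n)).
Proof. by have [y _] := msupp_nonempty (HY hm).1; exists. Qed.

Definition piece_iso (x : Xs n) : Ys (piece_map n) :=
  epsilon Ym_inhabited (fun y => f (dinj hn x) = dinj hm y).

Lemma piece_isoE x : msupp x -> f (dinj hn x) = dinj hm (piece_iso x).
Proof.
move=> hx; apply: (epsilon_spec Ym_inhabited (fun y => f (dinj hn x) = dinj hm y)).
by apply: dsum_car_dpiece; rewrite dpiece_iso //; apply/(dsum_msupp HA HX).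
Qed.

Lemma piece_map_preimage p : msupp p -> dpiece (f p) = piece_map n ->
  exists2 x, msupp x & p = dinj hn x.
Proof.
move=> hp fpn; have [x px] : exists x, p = dinj hn x.
  apply: dsum_car_dpiece; apply: (piece_map_inj (dpiece_idx p) hn).
  by rewrite -dpiece_iso.
by exists x => //; apply/(dsum_msupp HA HX hn); rewrite -px.
Qed.

Lemma msupp_preimage_dinj B :
  @msupp R X `&` f @^-1` (dinj hm @` B) =
  dinj hn @` (@msupp R (Xs n) `&` piece_iso @^-1` B).
Proof.
apply/seteqP; split=> [p [hp [y By fp]]|_ [x [hx By] <-]]; last first.
  split; first exact/(dsum_msupp HA HX).
  by rewrite /preimage /= piece_isoE //; exists (piece_iso x).
have [x hx px] := piece_map_preimage hp (esym (congr1 (@dpiece _ _ _) fp)); subst p.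
exists x => //; split => //; move: fp; rewrite /preimage /= piece_isoE //.
by move=> /dinj_inj <-.
Qed.

Lemma piece_meas B : eborel (@mdist R (Ys (piece_map n))) B ->
  (b (piece_map n))%:E * mmeas B = (a n)%:E * mmeas (@msupp R (Xs n) `&` piece_iso @^-1` B).
Proof.
move=> hB; rewrite -(dsum_meas_dinj b HY hm) -(dsum_meas_dinj a HX hn).
by rewrite -msupp_preimage_dinj; apply: f_meas; apply: dsum_borel_dinj.
Qed.

Lemma piece_weight : a n = b (piece_map n).
Proof.
have := piece_meas (@eborelT _ _ _); rewrite preimage_setT setIT.
rewrite (mu_setT (ext_mm_space_prob (HY hm).1)) (mu_msupp (HX hn).1) !mule1.
by case.
Qed.

Lemma piece_iso_mm_iso : mm_iso (Xs n) (Ys (piece_map n)).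
Proof.
exists piece_iso; split.
- move=> x hx; have := f_supp ((dsum_msupp HA HX hn x).2 hx).
  by rewrite piece_isoE // => /(dsum_msupp HB HY).
- move=> x x' hx hx'.
  have := f_isom ((dsum_msupp HA HX hn x).2 hx) ((dsum_msupp HA HX hn x').2 hx').
  by rewrite /= !piece_isoE // !dsum_dist_dinj.
- move=> y /(dsum_msupp HB HY hm) /f_onto [p hp fp].
  have [x hx px] := piece_map_preimage hp (congr1 (@dpiece _ _ _) fp).
  by exists x => //; apply: (@dinj_inj _ _ _ _ hm); rewrite -piece_isoE // -px.
- move=> B hB; apply: (EFin_muleI (lt0r_neq0 (inA1_gt0 HB hm))).
  by rewrite piece_meas // piece_weight.
Qed.

End Uniqueness.

Theorem dsum_mm_iso_unique (R : realType) (N M : option nat) (a b : nat -> R)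
    (Xs Ys : nat -> mmdata R) :
  inA1 N a -> inA1 M b ->
  (forall n, nidx N n -> mm_space (Xs n)) -> (forall m, nidx M m -> mm_space (Ys m)) ->
  mm_iso (dsum N a Xs) (dsum M b Ys) ->
  N = M /\
  exists phi : nat -> nat,
    [/\ (forall n, nidx N n -> nidx N (phi n)),
        (forall n m, nidx N n -> nidx N m -> phi n = phi m -> n = m),
        (forall m, nidx N m -> exists2 n, nidx N n & phi n = m) &
        (forall n, nidx N n -> a n = b (phi n) /\ mm_iso (Xs n) (Ys (phi n)))].
Proof.
move=> HA HB HX HY [f [f_supp f_isom f_onto f_meas]].
have NM := dsum_idx_eq HA HB HX HY f_isom f_onto; subst M.
split=> //; exists (piece_map f); split.
- exact: (piece_map_idx HA HX HY f_isom).
- exact: (piece_map_inj HA HX HY f_isom).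
- exact: (piece_map_onto HB HX HY f_isom f_onto).
- move=> n hn; split; first exact: (piece_weight HA HX HY f_isom f_meas).
  exact: (piece_iso_mm_iso HA HB HX HY f_supp f_isom f_onto f_meas).
Qed.

Lemma sval_inj (T : Type) (P : T -> Prop) : injective (@sval T P).
Proof. by case=> x hx [y hy] /= xy; subst y; congr exist; apply: Prop_irrelevance. Qed.

Definition supp_classes (R : realType) (X : mmdata R) : set (set X) :=
  [set fin_class (@mdist R X) x | x in @msupp R X].

Definition mm_restr (R : realType) (X : mmdata R) (C : set X) : mmdata R :=
  @Space R {x : X | C x} (fun p q => mdist (sval p) (sval q))
    (fun A => ((fine (mmeas C))^-1%:E * mmeas (sval @` A))%E).

Section Restriction.
Variables (R : realType) (X : mmdata R) (C : set X).
Hypotheses (HX : ext_mm_space X) (C_class : @supp_classes R X C).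
Local Notation d := (@mdist R X).
Local Notation mu := (@mmeas R X).
Local Notation XC := (mm_restr C).
Local Open Scope ereal_scope.

Let Hd := ext_mm_space_emetric HX.
Let Hmu := ext_mm_space_prob HX.

Lemma supp_class_closed x y : C x -> d x y < +oo -> C y.
Proof. by case: C_class => x0 _ <- x0x; apply: fin_class_trans. Qed.

Lemma supp_class_dist_fin x y : C x -> C y -> d x y < +oo.
Proof. by case: C_class => x0 _ <- /(fin_class_sym Hd); apply: fin_class_trans. Qed.

Let c := fine (mu C).

Let C_gt0 : 0 < mu C.
Proof. by case: C_class => x0 hx0 <-; apply: mu_fin_class_gt0. Qed.

Let C_le1 : mu C <= 1.
Proof.
rewrite -(mu_setT Hmu); apply: (le_mu Hmu) => //; last exact: eborelT.
by case: C_class => x0 _ <-; apply: fin_class_borel.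
Qed.

Lemma restr_massE : mu C = c%:E.
Proof. by rewrite /c; move: C_gt0 C_le1; case: (mu C). Qed.

Lemma restr_mass_le1 : (c <= 1)%R.
Proof. by rewrite -lee_fin -restr_massE. Qed.

Lemma restr_mass_gt0 : (0 < c)%R.
Proof. by rewrite -lte_fin -restr_massE. Qed.

Lemma restr_eball p e : eball d (sval p) e = sval @` eball (@mdist R XC) p e.
Proof.
apply/seteqP; split=> [y hy|_ [q hq <-] //].
have Cy : C y by apply: supp_class_closed (proj2_sig p) (lt_trans hy (ltry _)).
by exists (exist _ y Cy).
Qed.

Lemma restr_measE A : mu (sval @` A) = c%:E * @mmeas R XC A.
Proof. by rewrite /= muleA -EFinM mulfV ?mul1e // gt_eqF // restr_mass_gt0. Qed.

Lemma restr_borel A : eborel (@mdist R XC) A -> eborel d (sval @` A).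
Proof. by move=> hA; apply: (embed_borel restr_eball) => //; apply: sval_inj. Qed.

Lemma restr_msupp p : msupp (sval p) <-> msupp (p : XC).
Proof. exact: (@embed_msupp R XC X sval c restr_mass_gt0 restr_eball restr_measE p). Qed.

Lemma restr_emetric : is_emetric (@mdist R XC).
Proof.
split=> [p q|p|p q pq|p q|p q r].
- exact: (dist_ge0 Hd).
- exact: (dist_xx Hd).
- by apply: sval_inj; apply: (dist_eq0 Hd).
- exact: (distC Hd).
- exact: (dist_triangle Hd).
Qed.

Lemma restr_complete : is_complete (@mdist R XC).
Proof.
move=> u u_cauchy; case: HX => _ Hc _ _.
have [x ux] := Hc (fun k => sval (u k)) u_cauchy.
have [k uk] := ux 1%R ltr01.
have Cx : C x.
  by apply: supp_class_closed (proj2_sig (u k)) (lt_trans (uk k (leqnn k)) (ltry _)).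
by exists (exist _ x Cx).
Qed.

Lemma restr_separable : is_separable (@mdist R XC).
Proof.
case: HX => _ _ [s dense] _; case: (C_class) => x0 hx0 C_eq.
have Cx0 : C x0 by rewrite -C_eq; apply: fin_class_refl.
pose t k : XC := if pselect (C (s k)) is left Cs then exist _ (s k) Cs else exist _ x0 Cx0.
exists t => p e e0; have [k pk] := dense (sval p) e e0; exists k.
rewrite /t; case: pselect => // nCs; exfalso; apply: nCs.
exact: supp_class_closed (proj2_sig p) (lt_trans pk (ltry _)).
Qed.

Lemma restr_prob : is_borel_prob (@mdist R XC) (@mmeas R XC).
Proof.
have c_inv : (0 <= c^-1)%R by rewrite invr_ge0 ltW // restr_mass_gt0.
split=> [|A hA|F hF F_disj|].
- by rewrite /= image_set0 (mu_set0 Hmu) mule0.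
- by rewrite /= mule_ge0 ?lee_fin //; apply: (mu_ge0 Hmu); apply: restr_borel.
- have -> : (fun n => \sum_(0 <= i < n) @mmeas R XC (F i)) =
      (fun n => c^-1%:E * \sum_(0 <= i < n) mu (sval @` F i)).
    apply/funext => n; rewrite ge0_sume_distrr // => i _.
    by apply: (mu_ge0 Hmu); apply: restr_borel.
  rewrite /= image_bigcup; apply: cvgeZl => //.
  apply: (mu_cvg_bigcup Hmu) => [n|i j ij]; first exact: restr_borel.
  apply/seteqP; split=> // _ [[p Fip <-] [q Fjq /sval_inj qp]]; subst q.
  by have : (F i `&` F j) p by []; rewrite F_disj.
- rewrite /= (_ : sval @` setT = C); last first.
    apply/seteqP; split=> [_ [p _ <-]|x Cx]; first exact: proj2_sig.
    by exists (exist _ x Cx).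
  by rewrite restr_massE -EFinM mulVf // gt_eqF // restr_mass_gt0.
Qed.

Lemma restr_mm_space : mm_space XC.
Proof.
split; last by move=> p q; apply: supp_class_dist_fin (proj2_sig p) (proj2_sig q).
split.
- exact: restr_emetric.
- exact: restr_complete.
- exact: restr_separable.
- exact: restr_prob.
Qed.

End Restriction.

Lemma supp_classes_countable (R : realType) (X : mmdata R) :
  ext_mm_space X -> countable (@supp_classes R X).
Proof.
case=> Hd _ [s dense] _.
apply: (@sub_countable _ _ _ [set fin_class (@mdist R X) (s k) | k in [set: nat]]).
  apply: subset_card_le => _ [x hx <-]; have [k hk] := dense x 1%R ltr01.
  by exists k => //; apply/esym/(fin_class_eq Hd); apply: eball_fin_class hk.
exact: card_image_le.
Qed.

Lemma countable_nidx_enum (T : Type) (K : set (set T)) : countable K ->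
  exists (N : option nat) (G : nat -> set T),
    [/\ forall n, nidx N n -> K (G n),
        forall n n', nidx N n -> nidx N n' -> G n = G n' -> n = n' &
        forall C, K C -> exists2 n, nidx N n & G n = C].
Proof.
move=> cK; have [[m Im_K]|infK] := pselect (finite_set K).
  move: Im_K; rewrite card_eq_sym => /card_set_bijP [g [gK g_inj g_onto]].
  exists (Some m), (fun n => g n.-1); split.
  - by move=> [|n] //= hn; apply: gK.
  - by move=> [|n] [|n'] //= hn hn' /g_inj; rewrite !inE => /(_ hn hn') ->.
  - by move=> C /g_onto [i hi <-]; exists i.+1.
move: (eq_card_nat cK infK); rewrite card_eq_sym => /card_set_bijP [g [gK g_inj g_onto]].
exists None, (fun n => g n.-1); split.
- by move=> [|n] //= _; apply: gK.
- by move=> [|n] [|n'] //= _ _ /g_inj; rewrite !inE => /(_ Logic.I Logic.I) ->.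
- by move=> C /g_onto [i _ <-]; exists i.+1.
Qed.

Lemma inA1_series (R : realType) (N : option nat) (a : nat -> R) :
  (forall n, nidx N n -> 0 < a n <= 1) -> (forall n, ~~ nidx N n -> a n = 0) ->
  (fun m => (\sum_(0 <= i < m) a i)%:E) @ \oo --> 1%E -> inA1 N a.
Proof.
move=> a01 a0 a1; split=> //.
have shift m : \sum_(1 <= n < m.+1) a n = \sum_(0 <= n < m.+1) a n.
  by rewrite [RHS]big_ltn // a0 ?add0r //; case: (N).
case: N a01 a0 a1 => [k|] _ a0 a1; last first.
  rewrite -(cvg_shiftS (fun m => (\sum_(0 <= i < m) a i)%:E)) in a1.
  by under eq_fun do rewrite shift; apply: fine_cvg a1.
have : (\sum_(0 <= i < k.+1) a i)%:E = 1%E.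
  rewrite -(cvg_lim (@ereal_hausdorff R) a1); apply/esym.
  apply: (lim_near_cst (@ereal_hausdorff R)); near=> m.
  have km : (k.+1 <= m)%N by near: m; exists k.+1.
  rewrite (@big_cat_nat _ _ _ k.+1) //=.
  have -> : \sum_(k.+1 <= i < m) a i = 0.
    rewrite big_nat_cond big1 // => i /andP [/andP [ki _] _].
    by apply: a0; apply/negP => /andP [_]; rewrite leqNgt ki.
  by rewrite addr0.
by rewrite shift => -[].
Unshelve. all: by end_near.
Qed.

Section Existence.
Variables (R : realType) (X : mmdata R).
Hypothesis HX : ext_mm_space X.
Local Notation d := (@mdist R X).
Local Notation mu := (@mmeas R X).
Local Notation supp := (@msupp R X).
Variables (N : option nat) (G : nat -> set X).
Hypotheses (G_class : forall n, nidx N n -> @supp_classes R X (G n))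
  (G_inj : forall n n', nidx N n -> nidx N n' -> G n = G n' -> n = n')
  (G_onto : forall C, @supp_classes R X C -> exists2 n, nidx N n & G n = C).
Local Open Scope ereal_scope.

Let Hd := ext_mm_space_emetric HX.
Let Hmu := ext_mm_space_prob HX.

Definition part k := if nidx N k then G k else set0.
Definition weight k : R := fine (mu (part k)).
Definition component k : mmdata R := mm_restr (G k).

Lemma component_mm_space n : nidx N n -> mm_space (component n).
Proof. by move=> hn; apply: restr_mm_space HX (G_class hn). Qed.

Lemma part_borel k : eborel d (part k).
Proof.
rewrite /part; case: ifP => [hk|_]; last exact: eborel0.
by case: (G_class hk) => x _ <-; apply: fin_class_borel.
Qed.

Lemma mu_part k : mu (part k) = (weight k)%:E.
Proof.
rewrite /weight /part; case: ifP => [hk|_]; last by rewrite (mu_set0 Hmu).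
exact: restr_massE HX (G_class hk).
Qed.

Lemma G_mem_inj n n' y : nidx N n -> nidx N n' -> G n y -> G n' y -> n = n'.
Proof.
have class_of m : nidx N m -> G m y -> G m = fin_class d y.
  by move=> hm; case: (G_class hm) => x _ <- xy; apply: fin_class_eq.
by move=> hn hn' Gy G'y; apply: G_inj => //; rewrite class_of // class_of.
Qed.

Lemma part_disj i j : i <> j -> part i `&` part j = set0.
Proof.
move=> ij; apply/seteqP; split=> // y []; rewrite /part.
by case: ifP => // hi; case: ifP => // hj Gy G'y; apply: ij; apply: G_mem_inj Gy G'y.
Qed.

Lemma msupp_sub_parts : supp `<=` \bigcup_k part k.
Proof.
move=> x hx; have [n hn Gn] := G_onto (ex_intro2 _ _ x hx erefl).
by exists n => //; rewrite /part hn Gn; apply: fin_class_refl.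
Qed.

Lemma weight_inA1 : inA1 N weight.
Proof.
apply: inA1_series => [n hn|n /negbTE hn|].
- rewrite /weight /part hn.
  by rewrite (restr_mass_gt0 HX (G_class hn)) (restr_mass_le1 HX (G_class hn)).
- by rewrite /weight /part hn (mu_set0 Hmu).
have parts_mass : mu (\bigcup_k part k) = 1.
  have U_borel : eborel d (\bigcup_k part k) by apply: eborel_bigcup; apply: part_borel.
  apply/eqP; rewrite eq_le -{1}(mu_setT Hmu) -(mu_msupp HX); apply/andP; split.
    by apply: (le_mu Hmu) => //; apply: eborelT.
  by apply: (le_mu Hmu) => //; [apply: msupp_borel | apply: msupp_sub_parts].
have -> : (fun m => (\sum_(0 <= i < m) weight i)%:E) =
    (fun m => \sum_(0 <= i < m) mu (part i)).
  by apply/funext => m; rewrite -sumEFin; apply: eq_bigr => i _; rewrite mu_part.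
by rewrite -parts_mass; apply: (mu_cvg_bigcup Hmu); [apply: part_borel | apply: part_disj].
Qed.

Local Notation S := (dsum N weight component).

Definition dsum_proj (p : S) : X := sval (projT2 p).

Lemma dsum_proj_msupp n (hn : nidx N n) x :
  msupp (dinj hn x : S) <-> supp (dsum_proj (dinj hn x)).
Proof.
rewrite (dsum_msupp weight_inA1 component_mm_space).
exact: iff_sym (restr_msupp HX (G_class hn) x).
Qed.

Lemma dsum_proj_isom p q : msupp p -> msupp q ->
  d (dsum_proj p) (dsum_proj q) = mdist p q.
Proof.
have [n [hn [x ->]]] := dsum_carP p; have [m [hm [y ->]]] := dsum_carP q => _ _.
have [nm|nm] := eqVneq n m; first by subst m; rewrite /= dsum_dist_dinj.
rewrite /= dsum_dist_neq; last exact/eqP.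
apply/eqP; apply: contraT; rewrite -ltey => xy; case/negP: nm; apply/eqP.
apply: (G_mem_inj hn hm _ (proj2_sig y)).
by apply: (supp_class_closed HX (G_class hn) (proj2_sig x)); exact: xy.
Qed.

Lemma dsum_proj_onto y : supp y -> exists2 p : S, msupp p & dsum_proj p = y.
Proof.
move=> hy; have [n hn Gn] := G_onto (ex_intro2 _ _ y hy erefl).
have Gy : G n y by rewrite Gn; apply: fin_class_refl.
by exists (dinj hn (exist _ y Gy : component n)) => //; apply/dsum_proj_msupp.
Qed.

Lemma dsum_proj_meas B : eborel d B -> mu B = mmeas (@msupp R S `&` dsum_proj @^-1` B).
Proof.
move=> hB; set SB := _ `&` _.
have term n : nidx N n ->
    (weight n)%:E * mmeas (dsum_slice (n := n) SB) = mu (B `&` supp `&` part n).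
  move=> hn; rewrite /weight /part hn -(restr_measE HX (G_class hn)); congr mu.
  apply/seteqP; split=> [_ [x [h [Sx Bx]] <-]|y [[By hy] Gy]].
    by split; [split; last apply/(dsum_proj_msupp h) | exact: proj2_sig].
  exists (exist _ y Gy) => //; exists hn; split => //.
  exact/(dsum_proj_msupp hn).
have parts_disj i j : i <> j ->
    (B `&` supp `&` part i) `&` (B `&` supp `&` part j) = set0.
  by move=> ij; rewrite setIACA setIid setIA -(setIA _ (part i)) part_disj // setI0.
rewrite /= /dsum_meas (eq_eseriesr term) eseries_mkcond.
rewrite (@eq_eseriesr _ _ (fun i => mu (B `&` supp `&` part i))) => [|i _]; last first.
  by case: ifP => // hi; rewrite /part hi setI0 (mu_set0 Hmu).
have parts_borel i : eborel d (B `&` supp `&` part i).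
  by apply: eborelI; [apply: eborelI => //; apply: msupp_borel | apply: part_borel].
rewrite (mu_bigcup Hmu parts_borel parts_disj) -setI_bigcupr -setIA.
by rewrite (setIidl msupp_sub_parts) (mu_setI_msupp HX).
Qed.

Lemma dsum_components_iso : mm_iso S X.
Proof.
exists dsum_proj; split.
- by move=> p; have [n [hn [x ->]]] := dsum_carP p => /dsum_proj_msupp.
- exact: dsum_proj_isom.
- exact: dsum_proj_onto.
- exact: dsum_proj_meas.
Qed.

End Existence.

Theorem dsum_decomposition (R : realType) (X : mmdata R) : ext_mm_space X ->
  exists (N : option nat) (a : nat -> R) (Xs : nat -> mmdata R),
    [/\ inA1 N a, (forall n, nidx N n -> mm_space (Xs n)) & mm_iso (dsum N a Xs) X].
Proof.
move=> HX; have [N [G [G_class G_inj G_onto]]] :=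
  countable_nidx_enum (supp_classes_countable HX).
exists N, (weight N G), (component G); split.
- exact: weight_inA1.
- exact: component_mm_space.
- exact: dsum_components_iso.
Qed.

Theorem proposition3p8 (R : realType) :
  (forall X : mmdata R, ext_mm_space X ->
     exists (N : option nat) (a : nat -> R) (Xs : nat -> mmdata R),
       [/\ inA1 N a, (forall n, nidx N n -> mm_space (Xs n)) &
           mm_iso (dsum N a Xs) X])
  /\
  (forall (N M : option nat) (a b : nat -> R) (Xs Ys : nat -> mmdata R),
     inA1 N a -> inA1 M b ->
     (forall n, nidx N n -> mm_space (Xs n)) ->
     (forall m, nidx M m -> mm_space (Ys m)) ->
     mm_iso (dsum N a Xs) (dsum M b Ys) ->
     N = M /\
     exists phi : nat -> nat,
       [/\ (forall n, nidx N n -> nidx N (phi n)),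
           (forall n m, nidx N n -> nidx N m -> phi n = phi m -> n = m),
           (forall m, nidx N m -> exists2 n, nidx N n & phi n = m) &
           (forall n, nidx N n -> a n = b (phi n) /\ mm_iso (Xs n) (Ys (phi n)))]).
Proof.
split; first exact: dsum_decomposition.
exact: dsum_mm_iso_unique.
Qed.
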